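(* Let $\ell\in\mathbb{N}$, $s=2\ell-1$, and let $n_1,n_2,N_1,N_2\in\mathbb{N}$ satisfy $$\frac{n_1}{N_1}=\frac{n_2}{N_2}=s .$$ Let $m_1,m_2\in\mathbb{N}$ be arbitrary integers with $m_1<n_1$ and $m_2<n_2$, and put $\mathbf n=(n_1,n_2)$, $\mathbf m=(m_1,m_2)$. Let $\mathbf f=(f_1,f_2,f_3)$ and $\tilde{\mathbf f}=(\tilde f_1,\tilde f_2,\tilde f_3)$ be functions from $[-1,1]^2$ to $\mathbb{R}^3$. Define the color images (triples of matrices) $$I(i,j)=\mathbf f(x_i^{n_1},y_j^{n_2}),\quad \tilde I(i,j)=\tilde{\mathbf f}(x_i^{n_1},y_j^{n_2}),\qquad i=1,\dots,n_1,\ j=1,\dots,n_2,$$ $$R(i,j)=\mathbf f(x_i^{N_1},y_j^{N_2}),\qquad i=1,\dots,N_1,\ j=1,\dots,N_2,$$ and the output image $\tilde R=[\tilde R_1,\tilde R_2,\tilde R_3]$ by $$\tilde R_\lambda(i,j)=V_{\mathbf n}^{\mathbf m}\tilde f_\lambda(x_i^{N_1},y_j^{N_2}),\qquad i=1,\dots,N_1,\ j=1,\dots,N_2,\ \lambda=1,2,3 .$$ Then $$\mathrm{MSE}(R,\tilde R)\le s^2\,\mathrm{MSE}(I,\tilde I),$$ and the same estimate holds for the luma channels: $\mathrm{MSE}(R_Y,\tilde R_Y)\le s^2\,\mathrm{MSE}(I_Y,\tilde I_Y)$. If moreover $I=\tilde I$, then $\mathrm{PSNR}(R,\tilde R)=\infty$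 and $\mathrm{SSIM}(R,\tilde R)=1$.
   Context: Chebyshev nodes: for $n\in\mathbb N$ and $k=1,\dots,n$, $t_k^n=\frac{(2k-1)\pi}{2n}$, and $x_k^n=y_k^n=\cos(t_k^n)$ (zeros of the first-kind Chebyshev polynomial of degree $n$). Throughout, $\xi\in[-1,1]$ and $t\in[0,\pi]$ are related by $\xi=\cos t$. Orthogonal VP polynomials: for $n,m\in\mathbb N$ with $m\le n$ and $r=0,\dots,n-1$, $q^n_{m,r}(\xi)=\cos(rt)$ if $0\le r\le n-m$, and $q^n_{m,r}(\xi)=\frac{n+m-r}{2m}\cos(rt)+\frac{n-m-r}{2m}\cos((2n-r)t)$ if $n-m<r<n$. Fundamental VP polynomials: $\Phi^{n}_{m,k}(\xi)=\frac2n\Big[\frac12+\sum_{r=1}^{n-1}\cos(r t_k^n)\,q^n_{m,r}(\xi)\Big]$, $k=1,\dots,n$. VP polynomial of $g:[-1,1]^2\to\mathbb R$: $V_{\mathbf n}^{\mathbf m}g(x,y)=\sum_{i=1}^{n_1}\sum_{j=1}^{n_2}g(x_i^{n_1},y_j^{n_2})\,\Phi^{n_1}_{m_1,i}(x)\,\Phi^{n_2}_{m_2,j}(y)$. Metrics: for real $\nu\times\mu$ matrices, $\mathrm{MSE}(A,B)=\frac1{\nu\mu}\|A-B\|_F^2$ (Frobenius norm). For color images $A=[A_1,A_2,A_3]$, $B=[B_1,B_2,B_3]$, $\mathrm{MSE}(A,B)=\frac13\sum_{\lambda=1}^3\mathrm{MSE}(A_\lambda,B_\lambda)$. The luma channel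 is $A_Y=\sum_{\lambda=1}^3\alpha_\lambda A_\lambda+\alpha_4$ (entrywise, with fixed real coefficients $\alpha_1,\dots,\alpha_4$, those of the ITU-R BT.601 standard). $\mathrm{PSNR}(A,B)=20\log_{10}\big(\max_f/\sqrt{\mathrm{MSE}(A_Y,B_Y)}\big)$, where $\max_f>0$ is the maximal pixel value, with the convention that it equals $\infty$ when $\mathrm{MSE}(A_Y,B_Y)=0$. $\mathrm{SSIM}(A,B)=\frac{(2\mu_A\mu_B+c_1)(2\,\mathrm{cov}+c_2)}{(\mu_A^2+\mu_B^2+c_1)(\sigma_A^2+\sigma_B^2+c_2)}$, where $\mu_A,\mu_B$ and $\sigma_A^2,\sigma_B^2$ are the averages and variances of the entries of $A_Y,B_Y$, $\mathrm{cov}$ their covariance, and $c_1,c_2>0$ fixed constants. *)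

From Stdlib Require Import Reals Lra Lia Arith.
From Coquelicot Require Import Rbar.
Open Scope R_scope.

Fixpoint sum_1n (n : nat) (f : nat -> R) : R :=
  match n with
  | O => 0
  | S p => sum_1n p f + f (S p)
  end.

Definition cheb_t (n k : nat) : R := (2 * INR k - 1) * PI / (2 * INR n).
Definition cheb_node (n k : nat) : R := cos (cheb_t n k).

Definition q_VP (n m r : nat) (xi : R) : R :=
  let t := acos xi in
  if (r <=? n - m)%nat then cos (INR r * t)
  else (INR n + INR m - INR r) / (2 * INR m) * cos (INR r * t)
     + (INR n - INR m - INR r) / (2 * INR m) * cos ((2 * INR n - INR r) * t).

Definition Phi_VP (n m k : nat) (xi : R) : R :=
  2 / INR n * (1 / 2 + sum_1n (n - 1) (fun r => cos (INR r * cheb_t n k) * q_VP n m r xi)).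

Definition VP2 (n1 n2 m1 m2 : nat) (g : R -> R -> R) (x y : R) : R :=
  sum_1n n1 (fun i => sum_1n n2 (fun j =>
    g (cheb_node n1 i) (cheb_node n2 j) * Phi_VP n1 m1 i x * Phi_VP n2 m2 j y)).

(* A (grayscale) image of size nu x mu is a function (i,j) |-> A i j, i = 1..nu, j = 1..mu.
   A color image is a function (lambda,i,j) |-> A lambda i j, channel lambda = 1,2,3. *)
Definition gimage := nat -> nat -> R.
Definition cimage := nat -> nat -> nat -> R.

Definition MSE (nu mu : nat) (A B : gimage) : R :=
  / (INR nu * INR mu) * sum_1n nu (fun i => sum_1n mu (fun j => (A i j - B i j) ^ 2)).

Definition MSE_color (nu mu : nat) (A B : cimage) : R :=
  / 3 * sum_1n 3 (fun l => MSE nu mu (A l) (B l)).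

Definition luma (a1 a2 a3 a4 : R) (A : cimage) : gimage :=
  fun i j => a1 * A 1%nat i j + a2 * A 2%nat i j + a3 * A 3%nat i j + a4.

Definition log10 (x : R) : R := ln x / ln 10.

Definition PSNR (a1 a2 a3 a4 maxf : R) (nu mu : nat) (A B : cimage) : Rbar :=
  let e := MSE nu mu (luma a1 a2 a3 a4 A) (luma a1 a2 a3 a4 B) in
  if Req_EM_T e 0 then p_infty else Finite (20 * log10 (maxf / sqrt e)).

Definition gmean (nu mu : nat) (A : gimage) : R :=
  / (INR nu * INR mu) * sum_1n nu (fun i => sum_1n mu (fun j => A i j)).
Definition gcov (nu mu : nat) (A B : gimage) : R :=
  / (INR nu * INR mu) * sum_1n nu (fun i => sum_1n mu (fun j =>
      (A i j - gmean nu mu A) * (B i j - gmean nu mu B))).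
Definition gvar (nu mu : nat) (A : gimage) : R := gcov nu mu A A.

Definition SSIM (a1 a2 a3 a4 c1 c2 : R) (nu mu : nat) (A B : cimage) : R :=
  let AY := luma a1 a2 a3 a4 A in
  let BY := luma a1 a2 a3 a4 B in
  let muA := gmean nu mu AY in
  let muB := gmean nu mu BY in
  (2 * muA * muB + c1) * (2 * gcov nu mu AY BY + c2)
  / ((muA ^ 2 + muB ^ 2 + c1) * (gvar nu mu AY + gvar nu mu BY + c2)).

Definition sample_image (n1 n2 : nat) (f : nat -> R -> R -> R) : cimage :=
  fun l i j => f l (cheb_node n1 i) (cheb_node n2 j).

Definition VP_image (n1 n2 m1 m2 N1 N2 : nat) (ft : nat -> R -> R -> R) : cimage :=
  fun l i j => VP2 n1 n2 m1 m2 (ft l) (cheb_node N1 i) (cheb_node N2 j).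

(* With s = 2l - 1 odd and n = s N, every coarse Chebyshev node is a fine one:
   x_i^N = x_k^n for k = s i - (s - 1)/2.  By the discrete orthogonality of the
   cos (r t_k^n), the VP polynomial interpolates its data at the fine nodes, so R and
   R~ are the subsamples of I and I~ along these indices.  Every squared error of
   (R, R~) is thus one of the squared errors of (I, I~), and the normalisations
   1/(N1 N2) = s^2/(n1 n2) give the factor s^2.  If I = I~, the lumas of R and R~
   coincide at every pixel: their MSE vanishes and SSIM reduces to 1. *)

From Stdlib Require Import Reals Lra Lia.
From Coquelicot Require Import Rbar.
Open Scope R_scope.

Lemma sum_1n_ext n f g :
  (forall i, (1 <= i <= n)%nat -> f i = g i) -> sum_1n n f = sum_1n n g.
Proof.
  induction n as [|n IH]; simpl; intros H; [reflexivity|].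
  rewrite IH; [rewrite H by lia; reflexivity|]. intros i Hi; apply H; lia.
Qed.

Lemma sum_1n_add n f g : sum_1n n (fun i => f i + g i) = sum_1n n f + sum_1n n g.
Proof. induction n as [|n IH]; simpl; [lra|rewrite IH; lra]. Qed.

Lemma sum_1n_mult_l n c f : sum_1n n (fun i => c * f i) = c * sum_1n n f.
Proof. induction n as [|n IH]; simpl; [lra|rewrite IH; lra]. Qed.

Lemma sum_1n_const n c : sum_1n n (fun _ => c) = INR n * c.
Proof. induction n as [|n IH]; simpl sum_1n; [simpl; lra|rewrite IH, S_INR; lra]. Qed.

Lemma sum_1n_le n f g :
  (forall i, (1 <= i <= n)%nat -> f i <= g i) -> sum_1n n f <= sum_1n n g.
Proof.
  induction n as [|n IH]; simpl; intros H; [lra|].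
  apply Rplus_le_compat; [apply IH; intros i Hi|]; apply H; lia.
Qed.

Lemma sum_1n_ge0 n f : (forall i, (1 <= i <= n)%nat -> 0 <= f i) -> 0 <= sum_1n n f.
Proof.
  intros H. rewrite <- (Rmult_0_r (INR n)), <- sum_1n_const. now apply sum_1n_le.
Qed.

Lemma sum_1n_le_length p n f : (forall i, 0 <= f i) -> (p <= n)%nat -> sum_1n p f <= sum_1n n f.
Proof.
  intros Hf Hp. induction Hp as [|n _ IH]; simpl; [lra|]. specialize (Hf (S n)). lra.
Qed.

Lemma sum_1n_reindex_le N n f (ph : nat -> nat) :
  (forall i, 0 <= f i) -> (forall i, (ph i < ph (S i))%nat) -> (ph N <= n)%nat ->
  sum_1n N (fun i => f (ph i)) <= sum_1n n f.
Proof.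
  intros Hf Hph. revert n. induction N as [|N IH]; intros n Hn; simpl.
  - apply sum_1n_ge0; auto.
  - specialize (Hph N).
    destruct (ph (S N)) as [|q] eqn:Eq; [lia|].
    apply Rle_trans with (sum_1n (S q) f); [|apply sum_1n_le_length; auto].
    simpl. apply Rplus_le_compat_r, IH. lia.
Qed.

Lemma sum_1n_delta n a F :
  (1 <= a <= n)%nat -> sum_1n n (fun i => F i * (if (i =? a)%nat then 1 else 0)) = F a.
Proof.
  induction n as [|n IH]; intros Ha; [lia|]. cbn [sum_1n].
  destruct (Nat.eq_dec a (S n)) as [->|Hne].
  - rewrite Nat.eqb_refl, (sum_1n_ext _ _ (fun _ => 0)).
    + rewrite sum_1n_const. ring.
    + intros i Hi. replace (i =? S n)%nat with false by (symmetry; apply Nat.eqb_neq; lia).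
      ring.
  - rewrite IH by lia.
    replace (S n =? a)%nat with false by (symmetry; apply Nat.eqb_neq; lia). ring.
Qed.

Lemma cos_INR_mul_PI j : cos (INR j * PI) = (-1) ^ j.
Proof.
  induction j as [|j IH]; simpl pow; [now rewrite Rmult_0_l, cos_0|].
  rewrite S_INR, Rmult_plus_distr_r, Rmult_1_l, cos_plus, cos_PI, sin_PI, IH. ring.
Qed.

Lemma sin_INR_mul_PI j : sin (INR j * PI) = 0.
Proof.
  induction j as [|j IH]; [now rewrite Rmult_0_l, sin_0|].
  rewrite S_INR, Rmult_plus_distr_r, Rmult_1_l, sin_plus, cos_PI, sin_PI, IH. ring.
Qed.

Definition dirichlet (p : nat) (th : R) : R := 1 / 2 + sum_1n p (fun r => cos (INR r * th)).

Lemma dirichlet_sin p th : 2 * sin (th / 2) * dirichlet p th = sin ((INR p + 1 / 2) * th).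
Proof.
  unfold dirichlet. induction p as [|p IH]; cbn [sum_1n].
  - replace ((INR 0 + 1 / 2) * th) with (th / 2) by (simpl; lra). lra.
  - rewrite S_INR.
    replace ((INR p + 1 + 1 / 2) * th) with ((INR p + 1) * th + th / 2) by field.
    replace (sin ((INR p + 1) * th + th / 2))
      with (sin ((INR p + 1 / 2) * th) + 2 * cos ((INR p + 1) * th) * sin (th / 2)).
    + rewrite <- IH. ring.
    + replace ((INR p + 1 / 2) * th) with ((INR p + 1) * th - th / 2) by field.
      rewrite sin_plus, sin_minus. ring.
Qed.

Lemma dirichlet_0 p : dirichlet p 0 = INR p + 1 / 2.
Proof.
  unfold dirichlet. rewrite (sum_1n_ext _ _ (fun _ => 1)).
  - rewrite sum_1n_const. ring.
  - intros r _. now rewrite Rmult_0_r, cos_0.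
Qed.

(* (n - 1/2) th = j PI - th/2 for th = j PI / n, and sin (th/2) <> 0 since 0 < th/2 < PI. *)
Lemma dirichlet_multiple_PI n j :
  (0 < j < 2 * n)%nat -> dirichlet (n - 1) (INR j * PI / INR n) = - (-1) ^ j / 2.
Proof.
  intros Hj. pose proof PI_RGT_0.
  assert (Hn : 0 < INR n) by (apply lt_0_INR; lia).
  assert (Hj0 : 0 < INR j) by (apply lt_0_INR; lia).
  assert (Hjn : INR j < 2 * INR n).
  { replace 2 with (INR 2) by reflexivity. rewrite <- mult_INR. apply lt_INR; lia. }
  set (th := INR j * PI / INR n).
  assert (Hsin : 0 < sin (th / 2)).
  { apply sin_gt_0; unfold th.
    - apply Rmult_lt_0_compat; [|lra]. apply Rdiv_lt_0_compat; nra.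
    - apply Rmult_lt_reg_r with (2 * INR n); [lra|]. field_simplify; nra. }
  pose proof (dirichlet_sin (n - 1) th) as D.
  rewrite minus_INR, INR_1 in D by lia.
  replace ((INR n - 1 + 1 / 2) * th) with (INR j * PI - th / 2) in D by (unfold th; field; lra).
  rewrite sin_minus, sin_INR_mul_PI, cos_INR_mul_PI in D.
  apply Rmult_eq_reg_l with (2 * sin (th / 2)); [rewrite D; field|lra].
Qed.

Lemma dirichlet_cos_mul p a b :
  1 / 2 + sum_1n p (fun r => cos (INR r * a) * cos (INR r * b))
  = (dirichlet p (a - b) + dirichlet p (a + b)) / 2.
Proof.
  unfold dirichlet.
  rewrite (sum_1n_ext _ _ (fun r => / 2 * cos (INR r * (a - b)) + / 2 * cos (INR r * (a + b)))).
  - rewrite sum_1n_add, !sum_1n_mult_l. field.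
  - intros r _. rewrite Rmult_minus_distr_l, Rmult_plus_distr_l, cos_minus, cos_plus. field.
Qed.

Lemma cheb_t_range n k : (1 <= k <= n)%nat -> 0 < cheb_t n k < PI.
Proof.
  intros Hk. unfold cheb_t. pose proof PI_RGT_0.
  assert (1 <= INR k) by (rewrite <- INR_1; apply le_INR; lia).
  assert (INR k <= INR n) by (apply le_INR; lia).
  split.
  - apply Rdiv_lt_0_compat; nra.
  - apply Rmult_lt_reg_r with (2 * INR n); [lra|]. field_simplify; nra.
Qed.

(* At a node, cos ((2n - r) t) = - cos (r t), so the two blending weights add up to 1. *)
Lemma q_VP_at_node n m r h :
  (1 <= m)%nat -> (1 <= h <= n)%nat -> q_VP n m r (cheb_node n h) = cos (INR r * cheb_t n h).
Proof.
  intros Hm Hh. pose proof (cheb_t_range n h Hh).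
  assert (0 < INR m) by (apply lt_0_INR; lia).
  assert (0 < INR n) by (apply lt_0_INR; lia).
  unfold q_VP, cheb_node. rewrite acos_cos by lra.
  destruct (r <=? n - m)%nat; [reflexivity|].
  replace ((2 * INR n - INR r) * cheb_t n h)
    with ((PI - INR r * cheb_t n h) + 2 * INR (h - 1) * PI).
  - rewrite cos_period, Rtrigo_facts.cos_pi_minus. field. lra.
  - unfold cheb_t. rewrite minus_INR, INR_1 by lia. field. lra.
Qed.

Lemma cheb_cos_orthogonal_le n k h :
  (1 <= h)%nat -> (h <= k <= n)%nat ->
  1 / 2 + sum_1n (n - 1) (fun r => cos (INR r * cheb_t n k) * cos (INR r * cheb_t n h))
  = if (k =? h)%nat then INR n / 2 else 0.
Proof.
  intros Hh Hk. assert (0 < INR n) by (apply lt_0_INR; lia).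
  assert (Ediff : cheb_t n k - cheb_t n h = INR (k - h) * PI / INR n).
  { unfold cheb_t. rewrite minus_INR by lia. field. lra. }
  assert (Esum : cheb_t n k + cheb_t n h = INR (k + h - 1) * PI / INR n).
  { unfold cheb_t. rewrite minus_INR, plus_INR, INR_1 by lia. field. lra. }
  assert (Esign : (-1) ^ (k + h - 1) = - (-1) ^ (k - h)).
  { replace (k + h - 1)%nat with (k - h + S (2 * (h - 1)))%nat by lia.
    rewrite pow_add, pow_1_odd. ring. }
  rewrite dirichlet_cos_mul, Ediff, Esum, (dirichlet_multiple_PI n (k + h - 1)), Esign by lia.
  destruct (Nat.eqb_spec k h) as [->|Hne].
  - rewrite Nat.sub_diag, Rmult_0_l, Rdiv_0_l, dirichlet_0.
    rewrite minus_INR, INR_1 by lia. simpl. field.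
  - rewrite dirichlet_multiple_PI by lia. field.
Qed.

Lemma cheb_cos_orthogonal n k h :
  (1 <= k <= n)%nat -> (1 <= h <= n)%nat ->
  1 / 2 + sum_1n (n - 1) (fun r => cos (INR r * cheb_t n k) * cos (INR r * cheb_t n h))
  = if (k =? h)%nat then INR n / 2 else 0.
Proof.
  intros Hk Hh. destruct (Nat.le_ge_cases h k).
  - apply cheb_cos_orthogonal_le; lia.
  - rewrite Nat.eqb_sym, <- cheb_cos_orthogonal_le by lia.
    f_equal. apply sum_1n_ext. intros r _. apply Rmult_comm.
Qed.

Lemma Phi_VP_at_node n m k h :
  (1 <= m)%nat -> (1 <= k <= n)%nat -> (1 <= h <= n)%nat ->
  Phi_VP n m k (cheb_node n h) = if (k =? h)%nat then 1 else 0.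
Proof.
  intros Hm Hk Hh. assert (0 < INR n) by (apply lt_0_INR; lia).
  unfold Phi_VP. rewrite (sum_1n_ext _ _ (fun r => cos (INR r * cheb_t n k) * cos (INR r * cheb_t n h))).
  - rewrite cheb_cos_orthogonal by assumption. destruct (k =? h)%nat; field; lra.
  - intros r _. now rewrite q_VP_at_node.
Qed.

Lemma VP2_at_node n1 n2 m1 m2 g a b :
  (1 <= m1)%nat -> (1 <= m2)%nat -> (1 <= a <= n1)%nat -> (1 <= b <= n2)%nat ->
  VP2 n1 n2 m1 m2 g (cheb_node n1 a) (cheb_node n2 b) = g (cheb_node n1 a) (cheb_node n2 b).
Proof.
  intros Hm1 Hm2 Ha Hb. unfold VP2.
  rewrite (sum_1n_ext _ _ (fun i => g (cheb_node n1 i) (cheb_node n2 b) * (if (i =? a)%nat then 1 else 0))).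
  - now apply sum_1n_delta.
  - intros i Hi. rewrite <- Phi_VP_at_node with (n := n1) (m := m1) by assumption.
    rewrite <- (sum_1n_delta n2 b (fun j => g (cheb_node n1 i) (cheb_node n2 j) * Phi_VP n1 m1 i (cheb_node n1 a))) by assumption.
    apply sum_1n_ext. intros j Hj. now rewrite (Phi_VP_at_node n2 m2 j b).
Qed.

(* The index of the coarse node x_i^N among the nodes x_k^{(2l-1)N}:
   (2 k - 1) = (2l - 1) (2 i - 1) for k = nested_index l i. *)
Definition nested_index (l i : nat) : nat := ((2 * l - 1) * i + 1 - l)%nat.

Lemma nested_index_lt_succ l i : (1 <= l)%nat -> (nested_index l i < nested_index l (S i))%nat.
Proof. intros Hl. unfold nested_index. destruct i; nia. Qed.

Lemma nested_index_range l N i :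
  (1 <= l)%nat -> (1 <= i <= N)%nat -> (1 <= nested_index l i <= (2 * l - 1) * N)%nat.
Proof. intros Hl Hi. unfold nested_index. nia. Qed.

Lemma cheb_node_nested l N i :
  (1 <= l)%nat -> (1 <= i <= N)%nat -> cheb_node N i = cheb_node ((2 * l - 1) * N) (nested_index l i).
Proof.
  intros Hl Hi.
  assert (E : (2 * nested_index l i + (2 * l - 1) = 2 * (2 * l - 1) * i + 1)%nat)
    by (unfold nested_index; nia).
  apply (f_equal INR) in E. rewrite !plus_INR, !mult_INR in E.
  replace (INR 2) with 2 in E by (simpl; lra). rewrite INR_1 in E.
  assert (0 < INR (2 * l - 1)) by (apply lt_0_INR; lia).
  assert (0 < INR N) by (apply lt_0_INR; lia).
  unfold cheb_node, cheb_t. f_equal. rewrite mult_INR.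
  replace (2 * INR (nested_index l i)) with (2 * INR (2 * l - 1) * INR i + 1 - INR (2 * l - 1))
    by lra.
  field. lra.
Qed.

Lemma sample_image_nested l N1 N2 f lam i j :
  (1 <= l)%nat -> (1 <= i <= N1)%nat -> (1 <= j <= N2)%nat ->
  sample_image N1 N2 f lam i j
  = sample_image ((2 * l - 1) * N1) ((2 * l - 1) * N2) f lam (nested_index l i) (nested_index l j).
Proof.
  intros Hl Hi Hj. unfold sample_image. now rewrite (cheb_node_nested l N1 i), (cheb_node_nested l N2 j).
Qed.

Lemma VP_image_nested l N1 N2 m1 m2 ft lam i j :
  (1 <= l)%nat -> (1 <= m1)%nat -> (1 <= m2)%nat -> (1 <= i <= N1)%nat -> (1 <= j <= N2)%nat ->
  VP_image ((2 * l - 1) * N1) ((2 * l - 1) * N2) m1 m2 N1 N2 ft lam i j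
  = sample_image ((2 * l - 1) * N1) ((2 * l - 1) * N2) ft lam (nested_index l i) (nested_index l j).
Proof.
  intros Hl Hm1 Hm2 Hi Hj. unfold VP_image, sample_image.
  rewrite (cheb_node_nested l N1 i), (cheb_node_nested l N2 j) by assumption.
  apply VP2_at_node; auto using nested_index_range.
Qed.

Lemma Rinv_INR_ge0 n : 0 <= / INR n.
Proof.
  destruct n as [|n]; [simpl; rewrite Rinv_0; lra|].
  left. apply Rinv_0_lt_compat, lt_0_INR. lia.
Qed.

Definition sq_frobenius_dist (nu mu : nat) (A B : gimage) : R :=
  sum_1n nu (fun i => sum_1n mu (fun j => (A i j - B i j) ^ 2)).

Lemma sq_frobenius_dist_subsample_le N1 N2 n1 n2 (ph1 ph2 : nat -> nat) (A B C D : gimage) :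
  (forall i, (ph1 i < ph1 (S i))%nat) -> (forall j, (ph2 j < ph2 (S j))%nat) ->
  (ph1 N1 <= n1)%nat -> (ph2 N2 <= n2)%nat ->
  (forall i j, (1 <= i <= N1)%nat -> (1 <= j <= N2)%nat ->
     A i j - B i j = C (ph1 i) (ph2 j) - D (ph1 i) (ph2 j)) ->
  sq_frobenius_dist N1 N2 A B <= sq_frobenius_dist n1 n2 C D.
Proof.
  intros Hph1 Hph2 HN1 HN2 H. unfold sq_frobenius_dist.
  set (G := fun k1 k2 => (C k1 k2 - D k1 k2) ^ 2).
  assert (HG : forall k1 k2, 0 <= G k1 k2) by (intros; apply pow2_ge_0).
  apply Rle_trans with (sum_1n N1 (fun i => sum_1n n2 (G (ph1 i)))).
  - apply sum_1n_le. intros i Hi.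
    apply Rle_trans with (sum_1n N2 (fun j => G (ph1 i) (ph2 j))).
    + right. apply sum_1n_ext. intros j Hj. unfold G. now rewrite H.
    + now apply (sum_1n_reindex_le N2 n2 (G (ph1 i)) ph2).
  - apply (sum_1n_reindex_le N1 n1 (fun k1 => sum_1n n2 (G k1)) ph1); auto.
    intros k1. apply sum_1n_ge0. auto.
Qed.

Lemma MSE_subsample_le s N1 N2 (ph1 ph2 : nat -> nat) (A B C D : gimage) :
  (0 < s)%nat ->
  (forall i, (ph1 i < ph1 (S i))%nat) -> (forall j, (ph2 j < ph2 (S j))%nat) ->
  (ph1 N1 <= s * N1)%nat -> (ph2 N2 <= s * N2)%nat ->
  (forall i j, (1 <= i <= N1)%nat -> (1 <= j <= N2)%nat ->
     A i j - B i j = C (ph1 i) (ph2 j) - D (ph1 i) (ph2 j)) ->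
  MSE N1 N2 A B <= INR s ^ 2 * MSE (s * N1) (s * N2) C D.
Proof.
  intros Hs Hph1 Hph2 HN1 HN2 H.
  assert (INR s <> 0) by (apply not_0_INR; lia).
  change (/ (INR N1 * INR N2) * sq_frobenius_dist N1 N2 A B
          <= INR s ^ 2 * (/ (INR (s * N1) * INR (s * N2)) * sq_frobenius_dist (s * N1) (s * N2) C D)).
  rewrite !mult_INR, !Rinv_mult.
  replace (INR s ^ 2 * (/ INR s * / INR N1 * (/ INR s * / INR N2) * sq_frobenius_dist (s * N1) (s * N2) C D))
    with (/ INR N1 * / INR N2 * sq_frobenius_dist (s * N1) (s * N2) C D)
    by (set (a := / INR N1); set (b := / INR N2); field; assumption).
  apply Rmult_le_compat_l.
  - apply Rmult_le_pos; apply Rinv_INR_ge0.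
  - now apply sq_frobenius_dist_subsample_le with ph1 ph2.
Qed.

Lemma MSE_nested_le l N1 N2 (A B C D : gimage) :
  (1 <= l)%nat ->
  (forall i j, (1 <= i <= N1)%nat -> (1 <= j <= N2)%nat ->
     A i j - B i j = C (nested_index l i) (nested_index l j) - D (nested_index l i) (nested_index l j)) ->
  MSE N1 N2 A B <= INR (2 * l - 1) ^ 2 * MSE ((2 * l - 1) * N1) ((2 * l - 1) * N2) C D.
Proof.
  intros Hl H.
  apply MSE_subsample_le with (nested_index l) (nested_index l);
    auto using nested_index_lt_succ; unfold nested_index; nia.
Qed.

Lemma MSE_color_le nu mu nu' mu' c (A B C D : cimage) :
  (forall lam, MSE nu mu (A lam) (B lam) <= c * MSE nu' mu' (C lam) (D lam)) ->
  MSE_color nu mu A B <= c * MSE_color nu' mu' C D.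
Proof.
  intros H. unfold MSE_color. cbn [sum_1n].
  pose proof (H 1%nat). pose proof (H 2%nat). pose proof (H 3%nat). lra.
Qed.

Definition agree_on (nu mu : nat) (A B : gimage) : Prop :=
  forall i j, (1 <= i <= nu)%nat -> (1 <= j <= mu)%nat -> A i j = B i j.

Lemma agree_on_sym nu mu A B : agree_on nu mu A B -> agree_on nu mu B A.
Proof. intros H i j Hi Hj. symmetry. auto. Qed.

Lemma sum_1n2_ext nu mu (F G : nat -> nat -> R) :
  (forall i j, (1 <= i <= nu)%nat -> (1 <= j <= mu)%nat -> F i j = G i j) ->
  sum_1n nu (fun i => sum_1n mu (F i)) = sum_1n nu (fun i => sum_1n mu (G i)).
Proof. intros H. apply sum_1n_ext. intros i Hi. apply sum_1n_ext. auto. Qed.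

Lemma gmean_ext nu mu A B : agree_on nu mu A B -> gmean nu mu A = gmean nu mu B.
Proof. intros H. unfold gmean. f_equal. now apply sum_1n2_ext. Qed.

Lemma gcov_ext nu mu A A' B B' :
  agree_on nu mu A A' -> agree_on nu mu B B' -> gcov nu mu A B = gcov nu mu A' B'.
Proof.
  intros HA HB. unfold gcov. rewrite (gmean_ext _ _ _ _ HA), (gmean_ext _ _ _ _ HB).
  f_equal. apply sum_1n2_ext. intros i j Hi Hj. now rewrite HA, HB.
Qed.

Lemma gvar_ge0 nu mu A : 0 <= gvar nu mu A.
Proof.
  unfold gvar, gcov. rewrite Rinv_mult.
  apply Rmult_le_pos; [apply Rmult_le_pos; apply Rinv_INR_ge0|].
  apply sum_1n_ge0. intros i _. apply sum_1n_ge0. intros j _. apply Rle_0_sqr.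
Qed.

Lemma MSE_agree_eq0 nu mu A B : agree_on nu mu A B -> MSE nu mu A B = 0.
Proof.
  intros H. unfold MSE.
  rewrite (sum_1n2_ext nu mu _ (fun _ _ => 0)), (sum_1n_ext _ _ (fun _ => 0)).
  - rewrite sum_1n_const. ring.
  - intros i _. rewrite sum_1n_const. ring.
  - intros i j Hi Hj. rewrite H by assumption. ring.
Qed.

Lemma PSNR_infty_of_luma_agree a1 a2 a3 a4 maxf nu mu A B :
  agree_on nu mu (luma a1 a2 a3 a4 A) (luma a1 a2 a3 a4 B) ->
  PSNR a1 a2 a3 a4 maxf nu mu A B = p_infty.
Proof.
  intros H. unfold PSNR. cbv zeta.
  destruct (Req_EM_T _ 0) as [_|Hne]; [reflexivity|].
  exfalso. apply Hne. now apply MSE_agree_eq0.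
Qed.

Lemma SSIM_1_of_luma_agree a1 a2 a3 a4 c1 c2 nu mu A B :
  0 < c1 -> 0 < c2 -> agree_on nu mu (luma a1 a2 a3 a4 A) (luma a1 a2 a3 a4 B) ->
  SSIM a1 a2 a3 a4 c1 c2 nu mu A B = 1.
Proof.
  intros Hc1 Hc2 H. unfold SSIM, gvar. cbv zeta.
  set (AY := luma a1 a2 a3 a4 A) in *. set (BY := luma a1 a2 a3 a4 B) in *.
  assert (HBA := agree_on_sym _ _ _ _ H).
  rewrite (gmean_ext _ _ _ _ HBA), (gcov_ext _ _ AY AY BY AY), (gcov_ext _ _ BY AY BY AY)
    by easy.
  pose proof (gvar_ge0 nu mu AY). pose proof (pow2_ge_0 (gmean nu mu AY)).
  unfold gvar in *. field. split; nra.
Qed.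
Theorem proposition1
  (l n1 n2 N1 N2 m1 m2 : nat)
  (hl : (1 <= l)%nat)
  (hN1 : (1 <= N1)%nat) (hN2 : (1 <= N2)%nat)
  (hn1 : n1 = ((2 * l - 1) * N1)%nat) (hn2 : n2 = ((2 * l - 1) * N2)%nat)
  (hm1 : (1 <= m1 < n1)%nat) (hm2 : (1 <= m2 < n2)%nat)
  (f ft : nat -> R -> R -> R)
  (a1 a2 a3 a4 maxf c1 c2 : R)
  (hmaxf : 0 < maxf) (hc1 : 0 < c1) (hc2 : 0 < c2) :
  let s := INR (2 * l - 1) in
  let I := sample_image n1 n2 f in
  let It := sample_image n1 n2 ft in
  let Rimg := sample_image N1 N2 f in
  let Rt := VP_image n1 n2 m1 m2 N1 N2 ft in
  MSE_color N1 N2 Rimg Rt <= s ^ 2 * MSE_color n1 n2 I It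
  /\ MSE N1 N2 (luma a1 a2 a3 a4 Rimg) (luma a1 a2 a3 a4 Rt)
       <= s ^ 2 * MSE n1 n2 (luma a1 a2 a3 a4 I) (luma a1 a2 a3 a4 It)
  /\ ((forall (lam i j : nat), (1 <= lam <= 3)%nat -> (1 <= i <= n1)%nat ->
         (1 <= j <= n2)%nat -> I lam i j = It lam i j) ->
      PSNR a1 a2 a3 a4 maxf N1 N2 Rimg Rt = p_infty
      /\ SSIM a1 a2 a3 a4 c1 c2 N1 N2 Rimg Rt = 1).
Proof.
  intros s I It Rimg Rt. subst n1 n2.
  assert (HR : forall lam i j, (1 <= i <= N1)%nat -> (1 <= j <= N2)%nat ->
            Rimg lam i j = I lam (nested_index l i) (nested_index l j))
    by (intros; now apply sample_image_nested).
  assert (HT : forall lam i j, (1 <= i <= N1)%nat -> (1 <= j <= N2)%nat ->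
            Rt lam i j = It lam (nested_index l i) (nested_index l j))
    by (intros; apply VP_image_nested; lia).
  split; [|split].
  - apply MSE_color_le. intros lam.
    apply MSE_nested_le; [assumption|]. intros i j Hi Hj. now rewrite HR, HT.
  - apply MSE_nested_le; [assumption|]. intros i j Hi Hj.
    unfold luma. rewrite !HR, !HT by assumption. ring.
  - intros Heq.
    assert (Hluma : agree_on N1 N2 (luma a1 a2 a3 a4 Rimg) (luma a1 a2 a3 a4 Rt)).
    { intros i j Hi Hj. pose proof (nested_index_range l N1 i hl Hi).
      pose proof (nested_index_range l N2 j hl Hj).
      unfold luma. rewrite !HR, !HT, !Heq by (assumption || lia). reflexivity. }
    split; [now apply PSNR_infty_of_luma_agree|now apply SSIM_1_of_luma_agree].
Qed.
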